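(* Let $f\in\mathcal{F}$, let $A$ be a finite subset of $\mathbb{C}$ and let $b\in\mathbb{C}$. Assume that $A\subset f^{-1}(E)$ or $b\in\mathbb{C}\setminus A^{\mathrm{sym}}$. Then for every $\varepsilon>0$ there exists $g\in\mathcal{F}(f,A)$ such that $d_{\mathcal{F}}(f,g)<\varepsilon$ and $g(b)\in E$.
   Context: $\mathcal{F}$ is a Fréchet space of real and even entire maps (i.e. $f(\bar z)=\overline{f(z)}$ and $f(-z)=f(z)$) containing all real and even polynomial maps, whose topology is finer than the topology of local uniform convergence on $\mathbb{C}$; $(\|\cdot\|_j)_{j\ge0}$ is a sequence of seminorms defining its topology and $d_{\mathcal{F}}(f,g)=\sum_{j\ge0}2^{-j}\min\{1,\|f-g\|_j\}$. $E$ is a countable dense subset of $\mathbb{C}$, symmetric with respect to the real and imaginary axes, with $E\cap(\mathbb{R}\cup i\mathbb{R})$ dense in $\mathbb{R}\cup i\mathbb{R}$. For $f\in\mathcal{F}$ and $A\subseteq\mathbb{C}$, $\mathcal{F}(f,A)=\{g\in\mathcal{F}: g|_A=f|_A\text{ and } g'|_A=f'|_A\}$. For $A\subseteq\mathbb{C}$, $A^{\mathrm{sym}}=A\cup\bar A\cup(-A)\cup(-\bar A)$, where $\bar A$ is the complex conjugate of $A$. *)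

From HB Require Import structures.
From mathcomp Require Import all_boot all_order all_algebra.
From mathcomp Require Import all_classical all_reals all_analysis.
From mathcomp Require Import complex.
Import Order.TTheory GRing.Theory Num.Theory.
Import numFieldNormedType.Exports.
Set Implicit Arguments.
Unset Strict Implicit.
Unset Printing Implicit Defensive.
Local Open Scope ring_scope.
Local Open Scope classical_set_scope.

(* The complex numbers C = R[i] over a real field R : realType, seen as a
   numClosedFieldType (hence a normed module over itself, so that [derivable]
   and ['D_1] below are complex derivatives). *)
Definition CC (R : realType) : numClosedFieldType := R[i].

Section Defs.
Variable R : realType.
Local Notation C := (CC R).

Definition entire (f : C -> C) : Prop := forall z : C, derivable f z 1.

Definition real_map (f : C -> C) : Prop := forall z : C, f (z^*) = (f z)^*.

Definition even_map (f : C -> C) : Prop := forall z : C, f (- z) = f z.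

Definition dF (sn : nat -> (C -> C) -> R) (f g : C -> C) : R :=
  limn (series (fun j : nat => 2 ^- j * Num.min 1 (sn j (fun z => f z - g z)))).

Record frechet_space (F : set (C -> C)) (sn : nat -> (C -> C) -> R) : Prop := {
  fs_entire : forall f, F f -> entire f;
  fs_real : forall f, F f -> real_map f;
  fs_even : forall f, F f -> even_map f;
  fs_add : forall f g, F f -> F g -> F (fun z => f z + g z);
  fs_scale : forall (r : R) f, F f -> F (fun z => (r%:C)%C * f z);
  fs_poly : forall p : {poly C},
      real_map (fun z => p.[z]) -> even_map (fun z => p.[z]) -> F (fun z => p.[z]);
  fs_sn_ge0 : forall j f, F f -> 0 <= sn j f;
  fs_sn_triangle : forall j f g, F f -> F g ->
      sn j (fun z => f z + g z) <= sn j f + sn j g;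
  fs_sn_hom : forall j (r : R) f, F f ->
      sn j (fun z => (r%:C)%C * f z) = `|r| * sn j f;
  fs_separated : forall f, F f -> (forall j, sn j f = 0) -> f = (fun _ => 0);
  fs_complete : forall u : nat -> (C -> C), (forall n, F (u n)) ->
      (forall e : R, 0 < e -> exists N : nat, forall m n : nat,
          (N <= m)%N -> (N <= n)%N -> dF sn (u m) (u n) < e) ->
      exists2 h, F h & forall e : R, 0 < e -> exists N : nat, forall n : nat,
          (N <= n)%N -> dF sn (u n) h < e;
  (* the topology of F is finer than that of local uniform convergence on C *)
  fs_finer : forall f, F f -> forall rho eps : C, 0 < rho -> 0 < eps ->
      exists2 delta : R, 0 < delta & forall g, F g -> dF sn f g < delta ->
        forall z : C, `|z| <= rho -> `|f z - g z| < eps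
}.

Definition on_axes (z : C) : Prop := z \is Num.real \/ 'Re z = 0.

Record E_set (E : set C) : Prop := {
  E_countable : countable E;
  E_dense : dense E;
  E_sym_real : forall z, E z -> E (z^*);
  E_sym_imag : forall z, E z -> E (- z^*);
  E_axes_dense : forall x : C, on_axes x -> forall eps : C, 0 < eps ->
      exists2 e : C, E e /\ on_axes e & `|e - x| < eps
}.

Definition F_fix (F : set (C -> C)) (f : C -> C) (A : set C) : set (C -> C) :=
  [set g | F g /\ forall a, A a -> g a = f a /\ 'D_1 g a = 'D_1 f a].

Definition sym_set (A : set C) : set C :=
  A `|` (fun z => z^*) @` A `|` (fun z => - z) @` A `|` (fun z => - z^*) @` A.

End Defs.

From HB Require Import structures.
From mathcomp Require Import all_boot all_order all_algebra.
From mathcomp Require Import all_classical all_reals all_analysis.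
From mathcomp Require Import complex.
From mathcomp Require Import ring lra.
Import Order.TTheory GRing.Theory Num.Theory.
Import numFieldNormedType.Exports.
Import Normc.
Set Implicit Arguments.
Unset Strict Implicit.
Unset Printing Implicit Defensive.
Local Open Scope ring_scope.
Local Open Scope classical_set_scope.

(* If b lies in A^sym then A is contained in f^-1(E), and g := f works because f
   is real and even while E is symmetric under z |-> conj z and z |-> -conj z.
   Otherwise let q := prod_(a in A) (z^2 - a^2)^2 (z^2 - conj(a)^2)^2: a real even
   polynomial with a double zero at every point of A and q(b) <> 0.  Every
   g := f + (d1 + d2 z^2) q with d1, d2 real lies in F(f,A), d_F(f,g) is small when
   |d1| + |d2| is, and g(b) = f(b) + q(b) (d1 + d2 b^2).  If b^2 is not real then
   d1 + d2 b^2 ranges over all of C with coefficients controlled by its modulus,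
   so g(b) can be any point of E near f(b).  If b^2 is real then b lies on an
   axis, f(b) and q(b) are real, and g(b) can be any real point of E near f(b);
   such points exist because E is dense in the axes. *)

Section WeightedSeries.
Variable R : realType.

Lemma sum_inv_pow2_tail_le (N n : nat) : \sum_(N <= j < n) (2 : R)^-j <= 2 * 2^-N.
Proof.
have tail_eq k : \sum_(N <= j < N + k) (2 : R)^-j + 2 * 2^-(N + k) = 2 * 2^-N.
  elim: k => [|k IH]; first by rewrite addn0 big_geq // add0r.
  rewrite addnS big_nat_recr /= ?leq_addr // -IH -addrA exprS invfM.
  by congr (_ + _); field.
have [nN|Nn] := leqP n N; first by rewrite big_geq // mulr_ge0.
by rewrite -(subnKC (ltnW Nn)) -(tail_eq (n - N)%N) lerDl mulr_ge0.
Qed.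

Lemma inv_pow2_le1 (j : nat) : (2 : R)^-j <= 1.
Proof. by rewrite invf_le1 ?exprn_gt0 // exprn_ege1 // ler1n. Qed.

Lemma limn_series_le (a : R ^nat) (B : R) :
  (forall j, 0 <= a j) -> (forall n, series a n <= B) -> limn (series a) <= B.
Proof.
move=> a_ge0 aB; apply: limr_le; last exact: nearW.
apply: nondecreasing_is_cvgn; first exact: nondecreasing_series.
by exists B => _ [n _ <-].
Qed.

Lemma series_inv_pow2_min_le (x : R ^nat) (N n : nat) : (forall j, 0 <= x j) ->
  series (fun j => 2^-j * Num.min 1 (x j)) n <= \sum_(0 <= j < N) x j + 2 * 2^-N.
Proof.
move=> x_ge0; set a := fun j => _.
have a_ge0 j : 0 <= a j by rewrite mulr_ge0 // le_min ler01 x_ge0.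
have a_le_x j : a j <= x j.
  rewrite /a -[leRHS]mul1r ler_pM ?inv_pow2_le1 ?ge_min ?lexx ?orbT //.
  by rewrite le_min ler01 x_ge0.
have a_le_pow j : a j <= 2^-j by rewrite /a ler_piMr // ge_min lexx.
rewrite seriesEnat /=; apply: (@le_trans _ _ (\sum_(0 <= j < maxn n N) a j)).
  by rewrite (big_cat_nat _ (leq_maxl n N)) //= lerDl sumr_ge0.
rewrite (big_cat_nat _ (leq_maxr n N)) //=; apply: lerD; first exact: ler_sum.
exact: le_trans (ler_sum _ (fun j _ => a_le_pow j)) (sum_inv_pow2_tail_le _ _).
Qed.

Lemma series_inv_pow2_min_small (M : R ^nat) : (forall j, 0 <= M j) ->
  forall eps : R, 0 < eps -> exists2 eta : R, 0 < eta &
  forall (x : R ^nat) (t : R), 0 <= t < eta -> (forall j, 0 <= x j <= t * M j) ->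
    limn (series (fun j => 2^-j * Num.min 1 (x j))) < eps.
Proof.
move=> M_ge0 eps eps_gt0.
have [N _ /(_ N (leqnn N)) /= powN] :=
  near_infty_natSinv_expn_lt (PosNum (divr_gt0 eps_gt0 (ltr0n R 4))).
pose K := \sum_(0 <= j < N) M j.
have K_ge0 : 0 <= K by rewrite sumr_ge0.
have K1_gt0 : 0 < K + 1 by rewrite ltr_wpDl.
exists (eps / (2 * (K + 1))); first by rewrite divr_gt0 // mulr_gt0.
move=> x t /andP[t_ge0 t_lt] x_bound.
have x_ge0 j : 0 <= x j by case/andP: (x_bound j).
have sum_x_le : \sum_(0 <= j < N) x j <= t * K.
  by rewrite mulr_sumr ler_sum // => j _; case/andP: (x_bound j).
have tK_lt : t * K <= eps / 2.
  have : t * (K + 1) <= eps / 2.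
    by rewrite -ler_pdivlMr // -mulrA -invfM ltW.
  by apply: le_trans; rewrite ler_wpM2l // lerDl.
apply: (@le_lt_trans _ _ (\sum_(0 <= j < N) x j + 2 * 2^-N)).
  apply: limn_series_le => [j|n]; last exact: series_inv_pow2_min_le.
  by rewrite mulr_ge0 // le_min ler01 x_ge0.
move: powN; rewrite mul1r => powN; lra.
Qed.
End WeightedSeries.

Section HornerDerivative.
Variable K : numFieldType.

Lemma horner0_cst : horner (0 : {poly K}) = cst 0.
Proof. by apply/funext => y; rewrite horner0. Qed.

Lemma horner_MXaddC (p : {poly K}) (r : K) :
  horner (p * 'X + r%:P) = horner p * id + cst r.
Proof. by apply/funext => y /=; rewrite !(hornerE, fctE). Qed.

Lemma derivable_horner_num (p : {poly K}) (x : K) : derivable (horner p) x 1.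
Proof.
elim/poly_ind: p => [|p r IHp]; first by rewrite horner0_cst; exact: derivable_cst.
rewrite horner_MXaddC; apply: derivableD; last exact: derivable_cst.
by apply: derivableM => //; exact: derivable_id.
Qed.

Lemma derive_horner_num (p : {poly K}) (x : K) : 'D_1 (horner p) x = p^`().[x].
Proof.
elim/poly_ind: p => [|p r IHp]; first by rewrite horner0_cst derive_cst deriv0 horner0.
have dp := @derivable_horner_num p x.
have did : derivable id x 1 by exact: derivable_id.
rewrite horner_MXaddC deriveD ?derive_cst ?addr0; last exact: derivable_cst.
  rewrite deriveM // derive_id IHp derivD derivC addr0 derivM derivX !hornerE /=.
  by rewrite /GRing.scale /= mulr1 addrC mulrC.
exact: derivableM.
Qed.

Lemma horner_double_root (a : K) (r : {poly K}) :
  (('X - a%:P) ^+ 2 * r).[a] = 0 /\ (('X - a%:P) ^+ 2 * r)^`().[a] = 0.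
Proof.
rewrite derivM deriv_exp derivXsubC !hornerE subrr /= expr0n /= expr1 !mul0r.
by rewrite add0r subrr mul0r addr0.
Qed.

End HornerDerivative.

Section FrechetSpace.
Variables (R : realType) (F : set (CC R -> CC R)) (sn : nat -> (CC R -> CC R) -> R).
Hypothesis hF : frechet_space F sn.

Lemma dF_xx (f : CC R -> CC R) : F f -> dF sn f f = 0.
Proof.
move=> Ff; rewrite /dF (_ : (fun j => _) = fun _ => 0).
  rewrite (_ : series _ = fun _ => 0) ?lim_cst //.
  by apply/funext => n; rewrite seriesEnat /= big1.
apply/funext => j; rewrite (_ : (fun z => f z - f z) = fun z => (0%:C)%C * f z).
  by rewrite (fs_sn_hom hF) // normr0 mul0r (min_idPr ler01) mulr0.
by apply/funext => z; rewrite subrr mul0r.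
Qed.

Lemma F_lincomb (u v : CC R -> CC R) (c1 c2 : R) : F u -> F v ->
  F (fun z => (c1%:C)%C * u z + (c2%:C)%C * v z).
Proof. by move=> Fu Fv; apply: (fs_add hF); exact: (fs_scale hF). Qed.

Lemma sn_lincomb_le j (u v : CC R -> CC R) (c1 c2 : R) : F u -> F v ->
  sn j (fun z => (c1%:C)%C * u z + (c2%:C)%C * v z) <= `|c1| * sn j u + `|c2| * sn j v.
Proof.
move=> Fu Fv; rewrite -!(fs_sn_hom hF) //.
by apply: (fs_sn_triangle hF); exact: (fs_scale hF).
Qed.

Lemma dF_add_lincomb_small (u v : CC R -> CC R) : F u -> F v ->
  forall eps : R, 0 < eps -> exists2 eta : R, 0 < eta &
  forall (f : CC R -> CC R) (c1 c2 : R), `|c1| + `|c2| < eta ->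
    dF sn f (fun z => f z + ((c1%:C)%C * u z + (c2%:C)%C * v z)) < eps.
Proof.
move=> Fu Fv eps eps_gt0.
have M_ge0 j : 0 <= sn j u + sn j v by rewrite addr_ge0 ?(fs_sn_ge0 hF).
have [eta eta_gt0 small] := series_inv_pow2_min_small M_ge0 eps_gt0.
exists eta => // f c1 c2 c_lt; apply: (small _ (`|c1| + `|c2|)) => [|j].
  by rewrite addr_ge0 //= c_lt.
have -> : (fun z => f z - (f z + ((c1%:C)%C * u z + (c2%:C)%C * v z))) =
    (fun z => ((- c1)%:C)%C * u z + ((- c2)%:C)%C * v z).
  by apply/funext => z; rewrite !rmorphN /=; ring.
rewrite (fs_sn_ge0 hF _ (F_lincomb _ _ Fu Fv)) /=.
apply: le_trans (sn_lincomb_le _ _ _ Fu Fv) _.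
rewrite !normrN mulrDl.
by apply: lerD; rewrite ler_wpM2l // ?lerDl ?lerDr (fs_sn_ge0 hF).
Qed.

Lemma F_fix_add_double_zeros (f : CC R -> CC R) (p : {poly CC R})
    (A : set (CC R)) :
  F f -> F (horner p) -> (forall a, A a -> exists r, p = ('X - a%:P) ^+ 2 * r) ->
  F_fix F f A (f + horner p).
Proof.
move=> Ff Fp p_zeros; split; first exact: (fs_add hF).
move=> a /p_zeros [r p_eq]; have [pa0 dpa0] := horner_double_root a r.
rewrite -p_eq in pa0 dpa0; split; first by rewrite -[LHS]/(f a + p.[a]) pa0 addr0.
rewrite deriveD; [|exact: (fs_entire hF) | exact: derivable_horner_num].
by rewrite derive_horner_num dpa0 addr0.
Qed.

End FrechetSpace.

Section ComplexCoords.
Variable R : rcfType.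
Implicit Types (w t z : R[i]).

Lemma normC_normc z : `|z| = ((normc z)%:C)%C.
Proof. by case: z. Qed.

Lemma normc_real (x : R) : normc (x%:C)%C = `|x|.
Proof. by rewrite /= expr0n /= addr0 sqrtr_sqr. Qed.

Lemma normc_gt0 z : z != 0 -> 0 < normc z.
Proof.
move=> z_neq0; rewrite lt0r; apply/andP; split.
  by apply: contra z_neq0 => /eqP /eq0_normc ->.
by case: z {z_neq0} => a b; exact: sqrtr_ge0.
Qed.

Lemma Re_le_normc z : `|complex.Re z| <= normc z.
Proof. by case: z => a b /=; rewrite -sqrtr_sqr ler_wsqrtr // lerDl sqr_ge0. Qed.

Lemma Im_le_normc z : `|complex.Im z| <= normc z.
Proof. by case: z => a b /=; rewrite -sqrtr_sqr ler_wsqrtr // lerDr sqr_ge0. Qed.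

(* The real coordinates of t in the basis (1, w) of C when w is not real.  For
   real w the junk value x / 0 = 0 gives coordw w t = 0 and coord1 w t = Re t. *)
Definition coordw w t : R := complex.Im t / complex.Im w.
Definition coord1 w t : R := complex.Re t - coordw w t * complex.Re w.

Lemma coord_decomp w t : w \isn't Num.real \/ t \is Num.real ->
  t = ((coord1 w t)%:C + (coordw w t)%:C * w)%C.
Proof.
rewrite /coord1 /coordw; case: w t => [w1 w2] [t1 t2]; rewrite !complex_real /=.
case=> [w2_neq0 | /eqP ->]; apply/eqP; rewrite eq_complex /=.
  by apply/andP; split; apply/eqP; field.
by rewrite !mul0r !(subr0, addr0, add0r) !eqxx.
Qed.

Lemma coord_le w t :
  `|coord1 w t| + `|coordw w t|
    <= normc t * (1 + (1 + `|complex.Re w|) / `|complex.Im w|).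
Proof.
have Re_le := Re_le_normc t; have Im_le := Im_le_normc t.
set n := normc t; have n_ge0 : 0 <= n := le_trans (normr_ge0 _) Re_le.
have dw_le : `|coordw w t| <= n / `|complex.Im w|.
  by rewrite normrM normfV ler_wpM2r // invr_ge0.
have d1_le : `|coord1 w t| <= n + n / `|complex.Im w| * `|complex.Re w|.
  apply: le_trans (ler_normB _ _) _; rewrite normrM.
  by apply: lerD => //; rewrite ler_wpM2r.
have -> : n * (1 + (1 + `|complex.Re w|) / `|complex.Im w|) =
    n + n / `|complex.Im w| + n / `|complex.Im w| * `|complex.Re w| by ring.
move: d1_le dw_le; set X := n / _; set Y := X * _; lra.
Qed.

End ComplexCoords.

Section DenseSet.
Variables (R : realType) (E : set (CC R)).
Hypothesis hE : E_set E.

Lemma E_dense_normc (z : CC R) (rho : R) : 0 < rho ->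
  exists2 e, E e & normc (e - z) < rho.
Proof.
move=> rho_gt0; have rhoC_gt0 : (0 : CC R) < (rho%:C)%C by rewrite ltcR.
have [e [z_e Ee]] :=
  E_dense hE (ex_intro _ z (ballxx z rhoC_gt0)) (ball_open z (rho%:C)%C).
by exists e => //; move: z_e; rewrite /ball /= distrC normC_normc ltcR.
Qed.

Lemma E_real_dense (z : CC R) (rho : R) : z \is Num.real -> 0 < rho ->
  exists2 e, E e /\ e \is Num.real & normc (e - z) < rho.
Proof.
move=> /complex_realP [x ->] rho_gt0.
(* x' is kept away from the imaginary axis, so points of the axes near x' are real. *)
pose x' := x + (if 0 <= x then rho / 2 else - (rho / 2)).
have x'_far : rho / 2 <= `|x'|.
  rewrite /x'; case: ifP => [x_ge0 | /negbT]; first by rewrite ger0_norm; lra.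
  by rewrite -ltNge => x_lt0; rewrite ltr0_norm; lra.
have x'_near : `|x' - x| = rho / 2.
  by rewrite /x' addrC addKr; case: ifP => _; rewrite ?normrN gtr0_norm ?divr_gt0.
have x'_axes : on_axes ((x'%:C)%C : CC R) by left; apply/complex_realP; exists x'.
have rho2_gt0 : (0 : CC R) < ((rho / 2)%:C)%C by rewrite ltcR divr_gt0.
have [e [Ee e_axes] e_near] := E_axes_dense hE x'_axes rho2_gt0.
rewrite normC_normc ltcR in e_near.
have e_real : e \is Num.real.
  case: e_axes => // /eqP; rewrite -complexRe => /eqP [Re_e0]; exfalso.
  have := Re_le_normc (e - (x'%:C)%C).
  by case: e {Ee} Re_e0 e_near => e1 e2 /= ->; rewrite !sub0r normrN; lra.
exists e => //; rewrite -(subrK (x'%:C)%C e) -addrA -rmorphB.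
apply: le_lt_trans (le_normcD _ _) _; rewrite normc_real x'_near; lra.
Qed.

Lemma E_hits_real_lincomb (fb qb w : CC R) (eta : R) : 0 < eta -> qb != 0 ->
  w \isn't Num.real \/ (fb \is Num.real /\ qb \is Num.real) ->
  exists d1 d2 : R, `|d1| + `|d2| < eta /\ E (fb + qb * ((d1%:C)%C + (d2%:C)%C * w)).
Proof.
move=> eta_gt0 qb_neq0 w_or_real.
pose K := 1 + (1 + `|complex.Re w|) / `|complex.Im w|.
have K_gt0 : 0 < K by rewrite ltr_pwDl // divr_ge0 // addr_ge0.
have nq_gt0 := normc_gt0 qb_neq0.
have [e Ee [e_near e_real]] : exists2 e, E e &
    normc (e - fb) < eta * normc qb / K /\ (w \is Num.real -> e \is Num.real).
  have rho_gt0 : 0 < eta * normc qb / K by rewrite divr_gt0 ?mulr_gt0.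
  case: w_or_real => [w_nreal | [fb_real _]].
    have [e Ee e_near] := E_dense_normc fb rho_gt0.
    by exists e => //; split => // w_real; rewrite w_real in w_nreal.
  by have [e [Ee e_real] e_near] := E_real_dense fb_real rho_gt0; exists e.
pose t := (e - fb) / qb.
have t_coords : w \isn't Num.real \/ t \is Num.real.
  case: (boolP (w \is Num.real)) => [w_real | w_nreal]; [right | by left].
  case: w_or_real => [|[fb_real qb_real]]; first by rewrite w_real.
  by rewrite rpred_div ?rpredB ?e_real.
exists (coord1 w t), (coordw w t); split.
  apply: le_lt_trans (coord_le w t) _.
  by rewrite /t normcM normcV -ltr_pdivlMr // ltr_pdivrMr // mulrAC.
by rewrite -(coord_decomp t_coords) /t mulrC divfK // addrC subrK.
Qed.

Lemma E_sym_set_image (h : CC R -> CC R) (A : set (CC R)) (b : CC R) :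
  real_map h -> even_map h -> A `<=` h @^-1` E -> sym_set A b -> E (h b).
Proof.
move=> h_real h_even AE [[[/AE //|[a /AE Ea <-]]|[a /AE Ea <-]]|[a /AE Ea <-]].
- by rewrite h_real; exact: E_sym_real.
- by rewrite h_even.
- by rewrite h_even h_real; exact: E_sym_real.
Qed.

End DenseSet.

Section RealEvenMaps.
Variable R : realType.
Implicit Types (h : CC R -> CC R) (b : CC R).

Lemma conj_on_axes b : on_axes b -> b^* = b \/ b^* = - b.
Proof.
case=> [b_real | /eqP]; first by left; exact: conj_Creal.
rewrite ReE mulf_eq0 invr_eq0 pnatr_eq0 orbF addr_eq0 => /eqP b_eq.
by right; rewrite {2}b_eq opprK.
Qed.

Lemma real_even_on_axes h b : real_map h -> even_map h -> on_axes b -> h b \is Num.real.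
Proof.
move=> h_real h_even /conj_on_axes b_conj.
by rewrite CrealE -h_real; case: b_conj => ->; rewrite ?h_even.
Qed.

Lemma sqr_real_on_axes b : b ^+ 2 \is Num.real -> on_axes b.
Proof.
case: b => x y; rewrite expr2 /= complex_real [y * x]mulrC -mulr2n mulrn_eq0 /=.
rewrite mulf_eq0 => /orP[/eqP x0 | /eqP y0]; last by left; rewrite complex_real y0.
by right; rewrite -complexRe x0.
Qed.

End RealEvenMaps.

Section SymVanishingPoly.
Variable R : realType.
Implicit Types (a b z : CC R) (s : seq (CC R)) (p : {poly CC R}).

Definition sym_factor a : {poly CC R} :=
  ('X^2 - (a ^+ 2)%:P) ^+ 2 * ('X^2 - (a^* ^+ 2)%:P) ^+ 2.

Definition sym_vanishing_poly s : {poly CC R} := \prod_(a <- s) sym_factor a.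

Lemma horner_sym_vanishing_poly s z : (sym_vanishing_poly s).[z] =
  \prod_(a <- s) ((z ^+ 2 - a ^+ 2) ^+ 2 * (z ^+ 2 - a^* ^+ 2) ^+ 2).
Proof. by rewrite horner_prod; apply: eq_bigr => a _; rewrite !hornerE. Qed.

Lemma sym_vanishing_poly_even s : even_map (horner (sym_vanishing_poly s)).
Proof. by move=> z; rewrite !horner_sym_vanishing_poly sqrrN. Qed.

Lemma sym_vanishing_poly_real s : real_map (horner (sym_vanishing_poly s)).
Proof.
move=> z; rewrite !horner_sym_vanishing_poly rmorph_prod; apply: eq_bigr => a _ /=.
by rewrite rmorphM !rmorphXn !rmorphB !rmorphXn /= conjCK mulrC.
Qed.

Lemma sym_vanishing_poly_double_root s a : a \in s ->
  exists r, sym_vanishing_poly s = ('X - a%:P) ^+ 2 * r.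
Proof.
move=> a_in; rewrite /sym_vanishing_poly (big_rem a a_in) /= /sym_factor.
exists (('X + a%:P) ^+ 2 * ('X^2 - (a^* ^+ 2)%:P) ^+ 2 *
        \prod_(c <- rem a s) sym_factor c).
have -> : 'X^2 - (a ^+ 2)%:P = ('X - a%:P) * ('X + a%:P) :> {poly CC R}.
  by rewrite rmorphXn /=; ring.
ring.
Qed.

Lemma sym_vanishing_poly_neq0 s b : ~ sym_set [set` s] b ->
  (sym_vanishing_poly s).[b] != 0.
Proof.
move=> b_out; rewrite horner_sym_vanishing_poly prodf_seq_neq0.
have sqr_neq c : b != c -> b != - c -> b ^+ 2 - c ^+ 2 != 0.
  by move=> bc bNc; rewrite subr_sqr mulf_neq0 // ?subr_eq0 // addr_eq0.
apply/allP => a a_in /=; rewrite mulf_neq0 // expf_neq0 // sqr_neq //;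
  apply/eqP => b_eq; apply: b_out; rewrite b_eq.
- by left; left; left.
- by left; right; exists a.
- by left; left; right; exists a.
- by right; exists a.
Qed.

Lemma even_map_hornerMX2 p : even_map (horner p) -> even_map (horner (p * 'X^2)).
Proof. by move=> p_even z; rewrite !(hornerM, hornerX) p_even mulrNN. Qed.

Lemma real_map_hornerMX2 p : real_map (horner p) -> real_map (horner (p * 'X^2)).
Proof. by move=> p_real z; rewrite !(hornerM, hornerX) p_real !rmorphM. Qed.

Definition real_quadratic (d1 d2 : R) : {poly CC R} :=
  (d1%:C)%C%:P + (d2%:C)%C%:P * 'X^2.

Lemma horner_mul_real_quadratic p (d1 d2 : R) :
  horner (p * real_quadratic d1 d2) =
  (fun z => (d1%:C)%C * p.[z] + (d2%:C)%C * (p * 'X^2).[z]).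
Proof. by apply/funext => z; rewrite !(hornerM, hornerD, hornerC, hornerXn); ring. Qed.

End SymVanishingPoly.

Section Perturbation.
Variables (R : realType) (F : set (CC R -> CC R)) (sn : nat -> (CC R -> CC R) -> R).
Hypothesis hF : frechet_space F sn.

Lemma F_sym_vanishing_poly (s : seq (CC R)) : F (horner (sym_vanishing_poly s)).
Proof.
exact: (fs_poly hF (sym_vanishing_poly_real s) (sym_vanishing_poly_even s)).
Qed.

Lemma F_sym_vanishing_polyX2 (s : seq (CC R)) :
  F (horner (sym_vanishing_poly s * 'X^2)).
Proof.
exact: (fs_poly hF (real_map_hornerMX2 (sym_vanishing_poly_real s))
                   (even_map_hornerMX2 (sym_vanishing_poly_even s))).
Qed.

Lemma F_fix_add_sym_vanishing (f : CC R -> CC R) (s : seq (CC R)) (d1 d2 : R) :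
  F f -> F_fix F f [set` s] (f + horner (sym_vanishing_poly s * real_quadratic d1 d2)).
Proof.
move=> Ff; apply: (F_fix_add_double_zeros hF Ff).
  rewrite horner_mul_real_quadratic.
  exact: (F_lincomb hF _ _ (F_sym_vanishing_poly s) (F_sym_vanishing_polyX2 s)).
move=> a /sym_vanishing_poly_double_root [r ->].
by exists (r * real_quadratic d1 d2); rewrite mulrA.
Qed.

End Perturbation.

Theorem lemma3p3 (R : realType) (F : set (CC R -> CC R))
    (sn : nat -> (CC R -> CC R) -> R) (E : set (CC R))
    (hF : frechet_space F sn) (hE : E_set E)
    (f : CC R -> CC R) (A : set (CC R)) (b : CC R) :
  F f -> finite_set A ->
  (A `<=` f @^-1` E \/ ~ sym_set A b) ->
  forall eps : R, 0 < eps ->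
    exists2 g, F_fix F f A g & dF sn f g < eps /\ E (g b).
Proof.
move=> Ff A_fin A_or_b eps eps_gt0.
have [f_real f_even] := (fs_real hF Ff, fs_even hF Ff).
have [b_sym | b_out] := pselect (sym_set A b).
  exists f; first by split.
  split; first by rewrite (dF_xx hF Ff).
  case: A_or_b => [AE | /(_ b_sym) []].
  exact: (E_sym_set_image hE f_real f_even AE b_sym).
have [s A_eq] := (finite_seqP A).1 A_fin; rewrite A_eq in b_out *.
pose q := sym_vanishing_poly s.
have [eta eta_gt0 small] := dF_add_lincomb_small hF
  (F_sym_vanishing_poly hF s) (F_sym_vanishing_polyX2 hF s) eps_gt0.
have b_cases : b ^+ 2 \isn't Num.real \/ (f b \is Num.real /\ q.[b] \is Num.real).
  have [/sqr_real_on_axes b_axes | ] := boolP (b ^+ 2 \is Num.real); [right | by left].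
  by split; apply: real_even_on_axes b_axes => //;
    [exact: sym_vanishing_poly_real | exact: sym_vanishing_poly_even].
have [d1 [d2 [d_lt Egb]]] :=
  E_hits_real_lincomb hE eta_gt0 (sym_vanishing_poly_neq0 b_out) b_cases.
exists (f + horner (q * real_quadratic d1 d2)).
  exact: (F_fix_add_sym_vanishing hF _ _ _ Ff).
split; first by rewrite horner_mul_real_quadratic; exact: small.
by rewrite -[(f + _) b]/(f b + _) !(hornerM, hornerD, hornerC, hornerX).
Qed.
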